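(* For every integer $n\ge0$, with the operator acting on the variable $a$, \[ E(y/x,x;\theta)\{(-1)^nq^{\binom n2}a^n\}=U_n(x,y,a;q). \]
   Context: $q$ is a fixed complex number with $0<|q|<1$; $(a;q)_n=\prod_{i=0}^{n-1}(1-aq^i)$; ${n\brack k}=\frac{(q;q)_n}{(q;q)_k(q;q)_{n-k}}$. $P_n(x,y)=\prod_{i=0}^{n-1}(x-q^iy)$, $U_n(x,y,a;q)=\sum_{k=0}^n{n\brack k}(-1)^kq^{\binom k2}a^kP_{n-k}(x,y)$. For functions of $a$: $D_q\{f(a)\}=\frac{f(a)-f(aq)}{a}$, $\eta^{-1}\{f(a)\}=f(aq^{-1})$, $\theta=\eta^{-1}D_q$ (so $\theta\{f(a)\}=\frac{f(aq^{-1})-f(a)}{aq^{-1}}$), and the Cauchy companion operator is $E(\alpha,\beta;\theta)=\sum_{n=0}^\infty\frac{(\alpha;q)_n(-\beta\theta)^n}{(q;q)_n}$ (with $\theta^0$ the identity). *)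

From HB Require Import structures.
From mathcomp Require Import all_boot all_order all_algebra.
From mathcomp Require Import complex.
From mathcomp Require Import all_classical all_reals all_analysis.
Set Implicit Arguments. Unset Strict Implicit. Unset Printing Implicit Defensive.
Import Order.TTheory GRing.Theory Num.Theory.
Import numFieldNormedType.Exports.
Local Open Scope ring_scope.

Section QDefs.
Variable C : fieldType.
Variable q : C.

Definition qpoch (a : C) (n : nat) : C := \prod_(i < n) (1 - a * q ^+ i).

Definition qbinom (n k : nat) : C :=
  qpoch q n / (qpoch q k * qpoch q (n - k)).

Definition Pn (n : nat) (x y : C) : C := \prod_(i < n) (x - q ^+ i * y).

Definition Un (n : nat) (x y a : C) : C :=
  \sum_(k < n.+1) qbinom n k * (-1) ^+ k * q ^+ 'C(k, 2) * a ^+ k * Pn (n - k) x y.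

Definition theta (f : C -> C) : C -> C :=
  fun a => (f (a / q) - f a) / (a / q).

Definition theta_pow (k : nat) (f : C -> C) : C -> C := iter k theta f.

(* k-th term of E(alpha,beta;theta){f}(a):
   (alpha;q)_k (-beta theta)^k{f}(a) / (q;q)_k, where (-beta theta)^k = (-beta)^k theta^k
   since beta is a constant (independent of a). *)
Definition E_term (alpha beta : C) (f : C -> C) (a : C) (k : nat) : C :=
  qpoch alpha k * ((- beta) ^+ k * theta_pow k f a) / qpoch q k.

End QDefs.

From HB Require Import structures.
From mathcomp Require Import all_boot all_order all_algebra.
From mathcomp Require Import complex.
From mathcomp Require Import ring.
From mathcomp Require Import all_classical all_reals all_analysis.
Import Order.TTheory GRing.Theory Num.Theory.
Import numFieldTopology.Exports numFieldNormedType.Exports.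
Local Open Scope classical_set_scope.
Local Open Scope ring_scope.

(* theta lowers the degree of a monomial by one, so theta^k {a^n} is a multiple of
   a^(n-k) and vanishes for k > n: the series is a finite sum.  Its k-th term is
   the (n-k)-th term of U_n, because (-x)^k (y/x;q)_k = (-1)^k P_k(x,y) and the
   coefficients produced by theta^k telescope into the q-binomial coefficient. *)

Section ThetaMonomials.
Variable F : fieldType.
Variable q : F.
Hypothesis q_neq0 : q != 0.

Lemma theta_eq_nonzero (g h : F -> F) b :
  (forall z, z != 0 -> g z = h z) -> b != 0 -> theta q g b = theta q h b.
Proof.
move=> eq_gh b_neq0; rewrite /theta !eq_gh //.
by rewrite mulf_neq0 // invr_neq0.
Qed.

Lemma theta_monomial c m b : b != 0 ->
  theta q (fun z => c * z ^+ m) b = c * ((q^-1 ^+ m - 1) * q) * b ^+ m.-1.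
Proof.
move=> b_neq0; rewrite /theta; case: m => [|m] /=.
  by rewrite !expr0 !subrr !(mul0r, mulr0).
rewrite !exprS exprVn expr_div_n.
have qm_neq0 : q ^+ m != 0 by rewrite expf_neq0.
by field; rewrite qm_neq0 q_neq0 b_neq0.
Qed.

Lemma theta_pow_monomial c n k z : z != 0 ->
  theta_pow q k (fun w => c * w ^+ n) z =
  c * (\prod_(j < k) ((q^-1 ^+ (n - j) - 1) * q)) * z ^+ (n - k).
Proof.
elim: k z => [|k IHk] z z_neq0; first by rewrite /theta_pow big_ord0 mulr1 subn0.
rewrite /theta_pow iterS (@theta_eq_nonzero _
  (fun w => (c * \prod_(j < k) ((q^-1 ^+ (n - j) - 1) * q)) * w ^+ (n - k))) //.
by rewrite theta_monomial // big_ord_recr /= subnS !mulrA.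
Qed.

Lemma theta_pow_monomial_overflow c n k z : z != 0 -> (n < k)%N ->
  theta_pow q k (fun w => c * w ^+ n) z = 0.
Proof.
move=> z_neq0 lt_nk; rewrite theta_pow_monomial //.
by rewrite (bigD1 (Ordinal lt_nk)) //= subnn expr0 subrr !(mul0r, mulr0).
Qed.

Lemma prod_theta_coef n k : (k <= n)%N ->
  (\prod_(j < k) ((q^-1 ^+ (n - j) - 1) * q)) * q ^+ 'C(n, 2)
  = q ^+ 'C(n - k, 2) * \prod_(j < k) (1 - q ^+ (n - j)).
Proof.
elim: k => [|k IHk] le_kn; first by rewrite !big_ord0 mul1r mulr1 subn0.
rewrite !big_ord_recr /= mulrAC IHk ?(ltnW le_kn) //.
have -> : (n - k = (n - k.+1).+1)%N by rewrite subnS prednK // subn_gt0.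
set m := (n - k.+1)%N.
rewrite binS bin1 exprD exprVn !exprS.
have qm_neq0 : q ^+ m != 0 by rewrite expf_neq0.
by field; rewrite qm_neq0 q_neq0.
Qed.

End ThetaMonomials.

Section QPochhammer.
Variable F : fieldType.
Variable q : F.

Lemma Pn_qpoch k x y : x != 0 -> Pn q k x y = x ^+ k * qpoch q (y / x) k.
Proof.
move=> x_neq0; rewrite /Pn /qpoch -[in x ^+ k](card_ord k) -prodr_const -big_split /=.
by apply: eq_bigr => i _; field.
Qed.

Lemma qpoch_qq_split n k : (k <= n)%N ->
  qpoch q q n = (\prod_(j < k) (1 - q ^+ (n - j))) * qpoch q q (n - k).
Proof.
elim: k => [|k IHk] le_kn; first by rewrite big_ord0 mul1r subn0.
rewrite IHk ?(ltnW le_kn) // big_ord_recr /= -mulrA; congr (_ * _).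
have -> : (n - k = (n - k.+1).+1)%N by rewrite subnS prednK // subn_gt0.
by rewrite /qpoch big_ord_recr /= -exprS mulrC.
Qed.

End QPochhammer.

Lemma qpoch_qq_neq0 (F : numFieldType) (q : F) k : `|q| < 1 -> qpoch q q k != 0.
Proof.
move=> q_lt1; rewrite /qpoch prodf_seq_neq0; apply/allP => i _ /=.
rewrite -exprS subr_eq0 eq_sym; apply/negP => /eqP/(congr1 Num.norm).
rewrite normrX normr1 => q_pow_norm1.
by have := exprn_ilt1 i.+1 (normr_ge0 q) q_lt1; rewrite q_pow_norm1 ltxx.
Qed.

Section ETermMonomial.
Variable F : fieldType.
Variable q : F.
Hypothesis q_neq0 : q != 0.
Hypothesis qqpoch_neq0 : forall k, qpoch q q k != 0.
Variables (n : nat) (x y a : F).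
Hypotheses (x_neq0 : x != 0) (a_neq0 : a != 0).

Let f (b : F) : F := (-1) ^+ n * q ^+ 'C(n, 2) * b ^+ n.

Lemma E_term_monomial k : (k <= n)%N ->
  E_term q (y / x) x f a k =
  qbinom q n (n - k) * (-1) ^+ (n - k) * q ^+ 'C(n - k, 2) * a ^+ (n - k)
   * Pn q (n - (n - k)) x y.
Proof.
move=> le_kn.
have sign : (-1) ^+ n = (-1) ^+ (n - k) / (-1) ^+ k :> F.
  by rewrite invr_sign -exprD subnK.
rewrite /E_term /f theta_pow_monomial // subKn // Pn_qpoch // /qbinom subKn //.
rewrite (@qpoch_qq_split _ q _ _ le_kn) [(-1) ^+ n * _ * _]mulrAC.
rewrite -[(-1) ^+ n * _ * _]mulrA prod_theta_coef // sign (exprNn x).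
by field; rewrite !qqpoch_neq0 signr_eq0.
Qed.

Lemma E_term_monomial_overflow k : (n < k)%N -> E_term q (y / x) x f a k = 0.
Proof.
by move=> lt_nk; rewrite /E_term /f theta_pow_monomial_overflow // !(mulr0, mul0r).
Qed.

Lemma E_partial_sum_monomial N : (n < N)%N ->
  \sum_(k < N) E_term q (y / x) x f a k = Un q n x y a.
Proof.
move=> lt_nN.
rewrite -(subnK lt_nN) addnC big_split_ord /= [X in _ + X]big1 ?addr0; last first.
  by move=> i _; rewrite E_term_monomial_overflow //= ltnS leq_addr.
rewrite /Un [RHS](reindex_inj rev_ord_inj) /=.
by apply: eq_bigr => i _; rewrite E_term_monomial // ?subSS // -ltnS.
Qed.

End ETermMonomial.

Theorem mainTheorem8 (R : realType) (q x y a : R[i]) (n : nat) :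
  0 < `|q| -> `|q| < 1 -> x != 0 -> a != 0 ->
  (fun N : nat => (\sum_(k < N)
      E_term q (y / x) x (fun b : R[i] => (-1) ^+ n * q ^+ 'C(n, 2) * b ^+ n) a k
       : (R[i] : numFieldType)))
    @ \oo --> (Un q n x y a : (R[i] : numFieldType)).
Proof.
move=> q_gt0 q_lt1 x_neq0 a_neq0.
have q_neq0 : q != 0 by rewrite -normr_gt0.
apply: cvg_near_cst; exists n.+1 => // N /= lt_nN.
by apply: E_partial_sum_monomial => // k; apply: qpoch_qq_neq0.
Qed.
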